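(* Let $\Sigma=\{1,\dots,q\}^{\mathbb N}$ with shift $\sigma$ and $\psi:\Sigma\to\mathbb R$ continuous. If $\lim_{n\to\infty}\frac1n\|\xi_n\|_\infty=0$, then every conformal measure for $\psi$ is a weak Gibbs measure for $\psi$, and $\psi$ is of weak bounded variation.
   Context: $\mathcal L_\psi\phi(\underline x)=\sum_{\underline y\in\sigma^{-1}\underline x}e^{\psi(\underline y)}\phi(\underline y)$; a conformal measure is a finite positive measure $\mu$ with $\mathcal L_\psi^*\mu=r(\mathcal L_\psi)\mu$, where $r$ is the spectral radius and $(\mathcal L_\psi^*\mu)(\phi)=\int\mathcal L_\psi\phi\,d\mu$. Cylinders $[a_0\dots a_{n-1}]$, $\mathcal C_n$ the set of cylinders of length $n$, $\psi^n=\sum_{i<n}\psi\circ\sigma^i$, $\xi_n(\underline x)=\sup_{\underline y\in[x_0\dots x_{n-1}]}\sum_{i=0}^{n-1}|\psi(\sigma^i\underline x)-\psi(\sigma^i\underline y)|$. $\mu$ is a weak Gibbs measure for $\psi$ if there are a constant $P$ and positive numbers $K_n$ with $\lim_n\frac{\log K_n}{n}=0$ such that for all $n$, $\underline x$ and $\underline y\in[x_0\dots x_{n-1}]$: $K_n^{-1}\le\mu([x_0\dots x_{n-1}])e^{-\psi^n(\underline y)+nP}\le K_n$. $\psi$ is of weak bounded variation if there are positive $K_n$ with $\lim_n\frac{\log K_n}n=0$ and $\sup_{C\in\mathcal C_n}\sup_{\underline y,\underline w\in C}e^{\psi^n(\underline y)-\psi^n(\underline w)}\le K_n$ for all $n$.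 *)

From HB Require Import structures.
From mathcomp Require Import all_boot all_order all_algebra.
From mathcomp Require Import all_classical all_reals all_analysis.
Set Implicit Arguments. Unset Strict Implicit. Unset Printing Implicit Defensive.
Import Order.TTheory GRing.Theory Num.Theory numFieldNormedType.Exports.
Local Open Scope classical_set_scope.
Local Open Scope ring_scope.

(* The full shift on the alphabet 'I_q.+1 (i.e. q.+1 symbols). *)
Definition Sigma (q : nat) := nat -> 'I_q.+1.
HB.instance Definition _ q := Choice.copy (Sigma q) (nat -> 'I_q.+1).
HB.instance Definition _ q := isPointed.Build (Sigma q) (fun _ => ord0).

Definition shift q (x : Sigma q) : Sigma q := fun n => x n.+1.

(* prepending a symbol: the preimages of x under the shift are the [cons a x] *)
Definition scons q (a : 'I_q.+1) (x : Sigma q) : Sigma q :=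
  fun n => if n is m.+1 then x m else a.

Definition agree q (n : nat) (x y : Sigma q) : Prop := forall i, (i < n)%N -> y i = x i.

Definition cylinder q (n : nat) (x : Sigma q) : set (Sigma q) := [set y | agree n x y].

(* cylinder sets generate the (Borel) sigma-algebra of Sigma *)
Definition cylinders q : set (set (Sigma q)) :=
  [set C | exists n x, C = cylinder n x].
Definition SigmaM q := g_sigma_algebraType (@cylinders q).

(* continuity w.r.t. the product topology of the discrete alphabet *)
Definition scontinuous q {R : realType} (f : Sigma q -> R) : Prop :=
  forall x (e : R), 0 < e -> exists n, forall y, agree n x y -> `|f x - f y| < e.

Definition birkhoff q {R : realType} (psi : Sigma q -> R) (n : nat) (x : Sigma q) : R :=
  \sum_(i < n) psi (iter i (@shift q) x).

Definition transfer q {R : realType} (psi : Sigma q -> R) (phi : Sigma q -> R)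
  (x : Sigma q) : R :=
  \sum_(a : 'I_q.+1) expR (psi (scons a x)) * phi (scons a x).

Definition supnorm q {R : realType} (f : Sigma q -> R) : R :=
  sup (range (fun x => `|f x|)).

Definition opnorm_pow q {R : realType} (psi : Sigma q -> R) (n : nat) : R :=
  sup [set supnorm (iter n (transfer psi) phi) |
        phi in [set phi : Sigma q -> R | scontinuous phi /\ supnorm phi <= 1]].

(* spectral radius of L_psi on C(Sigma), via Gelfand's formula *)
Definition spectral_radius q {R : realType} (psi : Sigma q -> R) : R :=
  lim ((fun n : nat => powR (opnorm_pow psi n) n%:R^-1) @ \oo).

Definition conformal q {R : realType} (psi : Sigma q -> R)
  (mu : {measure set (SigmaM q) -> \bar R}) : Prop :=
  (0 < mu setT < +oo)%E /\
  forall phi : Sigma q -> R, scontinuous phi ->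
    (\int[mu]_x (transfer psi phi x)%:E =
     (spectral_radius psi)%:E * \int[mu]_x (phi x)%:E)%E.

Definition xi q {R : realType} (psi : Sigma q -> R) (n : nat) (x : Sigma q) : R :=
  sup [set \sum_(i < n) `|psi (iter i (@shift q) x) - psi (iter i (@shift q) y)|
       | y in cylinder n x].

Definition subexp {R : realType} (K : nat -> R) : Prop :=
  (forall n, 0 < K n) /\ (fun n : nat => ln (K n) / n%:R) @ \oo --> (0 : R).

Definition weak_gibbs q {R : realType} (psi : Sigma q -> R)
  (mu : {measure set (SigmaM q) -> \bar R}) : Prop :=
  exists (P : R) (K : nat -> R), subexp K /\
    forall n (x y : Sigma q), agree n x y ->
      ((K n)^-1%:E <= mu (cylinder n x) * (expR (- birkhoff psi n y + n%:R * P))%:E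
       <= (K n)%:E)%E.

Definition weak_bounded_variation q {R : realType} (psi : Sigma q -> R) : Prop :=
  exists K : nat -> R, subexp K /\
    forall n (x y w : Sigma q), agree n x y -> agree n x w ->
      expR (birkhoff psi n y - birkhoff psi n w) <= K n.

(* A continuous potential on the compact shift space is bounded, so [xi_n] is a
   genuine supremum and the Birkhoff sum [psi^n] oscillates by at most
   [2 |xi_n|] on each n-cylinder; as this is [o(n)], its exponential is a
   subexponential constant, which is weak bounded variation.  For a conformal
   measure [mu] with eigenvalue [lambda], iterating [L^* mu = lambda mu] against
   indicators of cylinders gives
   [lambda^n mu[w_0 ... w_{n-1}] = \int exp (psi^n (w_0 ... w_{n-1} x)) dmu(x)],
   so [lambda^n mu[w_0 ... w_{n-1}] exp (- psi^n y)] stays within a factor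
   [exp (2 |xi_n|)] of the total mass: the weak Gibbs property with
   [P = ln lambda]. *)

From Pilot Require Import Defs.
From HB Require Import structures.
From mathcomp Require Import all_boot all_order all_algebra.
From mathcomp Require Import all_classical all_reals all_analysis.
From mathcomp Require Import ring lra.
Import Order.TTheory GRing.Theory Num.Theory numFieldNormedType.Exports.
Local Open Scope classical_set_scope.
Local Open Scope ring_scope.
Set Implicit Arguments. Unset Strict Implicit.

Lemma le_symmetric_bounds (R : realFieldType) (e b m X : R) : 0 < e -> 0 < b -> 0 < m ->
  b / e * m <= X <= b * e * m -> (e * (m + m^-1))^-1 <= b^-1 * X <= e * (m + m^-1).
Proof.
move=> e0 b0 m0 /andP[lo hi]; have mV0 : 0 < m^-1 by rewrite invr_gt0.
rewrite [b^-1 * X]mulrC ler_pdivlMr // ler_pdivrMr //; apply/andP; split.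
  apply: le_trans lo; rewrite [leRHS](_ : _ = m / e * b); last by ring.
  rewrite ler_pM2r // invfM mulrC ler_pM2r ?invr_gt0 //.
  by rewrite -[leRHS]invrK lef_pV2 ?posrE ?invr_gt0 ?addr_gt0 //; lra.
apply: le_trans hi _; rewrite [leLHS](_ : _ = e * m * b); last by ring.
by rewrite ler_pM2r // ler_pM2l // lerDl ltW.
Qed.

Lemma subexp_expRM (R : realType) (a : nat -> R) (c : R) : 0 < c ->
  (fun n => a n / n%:R) @ \oo --> 0 -> subexp (fun n => expR (a n) * c).
Proof.
move=> c0 a0; split=> [n | ]; first by rewrite mulr_gt0 ?expR_gt0.
have -> : (fun n => ln (expR (a n) * c) / n%:R) = (fun n => a n / n%:R + ln c / n%:R).
  by apply: funext => n; rewrite lnM ?posrE ?expR_gt0 // expRK mulrDl.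
rewrite -[0]addr0; apply: cvgD => //.
rewrite -(mulr0 (ln c)); apply: cvgM; first exact: cvg_cst.
by rewrite -cvg_shiftS; exact: cvg_harmonic.
Qed.

Section IntegralBounds.
Local Open Scope ereal_scope.
Context d (T : measurableType d) (R : realType) (mu : {measure set T -> \bar R}).

(* No measurability is needed: the integral of a nonnegative function is the
   supremum of the integrals of the simple functions below it. *)
Lemma ge0_le_integralT (f g : T -> \bar R) : (forall x, 0 <= f x) ->
  (forall x, f x <= g x) -> \int[mu]_x f x <= \int[mu]_x g x.
Proof.
move=> f0 fg; have g0 x : 0 <= g x := le_trans (f0 x) (fg x).
rewrite !ge0_integralTE //; apply: ereal_sup_le => _ [h /= hf <-].
by exists h => //= x; exact: le_trans (hf x) (fg x).
Qed.

Lemma integral_ge_cst (c : R) (f : T -> R) : (0 <= c)%R -> (forall x, c <= f x)%R ->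
  c%:E * mu setT <= \int[mu]_x (f x)%:E.
Proof.
by move=> c0 cf; rewrite -integral_cst //; apply: ge0_le_integralT => x; rewrite lee_fin.
Qed.

Lemma integral_le_cst (c : R) (f : T -> R) : (forall x, 0 <= f x)%R ->
  (forall x, f x <= c)%R -> \int[mu]_x (f x)%:E <= c%:E * mu setT.
Proof.
by move=> f0 fc; rewrite -integral_cst //; apply: ge0_le_integralT => x; rewrite lee_fin.
Qed.

End IntegralBounds.

Section ShiftSpace.
Variables (R : realType) (q : nat).
Implicit Types (x y z w : Sigma q) (f g psi : Sigma q -> R).

Definition prepend n w x : Sigma q := fun i => if (i < n)%N then w i else x (i - n)%N.

Lemma agree_prepend n w x : agree n w (prepend n w x).
Proof. by move=> i ltin; rewrite /prepend ltin. Qed.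

Lemma prepend0 w x : prepend 0 w x = x.
Proof. by apply: funext => i; rewrite /prepend subn0. Qed.

Lemma prependS n w x : prepend n.+1 w x = scons (w 0%N) (prepend n (Defs.shift w) x).
Proof. by apply: funext => -[|i] //=; rewrite /prepend /Defs.shift ltnS subSS. Qed.

Lemma birkhoffS psi n x : birkhoff psi n.+1 x = psi x + birkhoff psi n (Defs.shift x).
Proof.
rewrite /birkhoff big_ord_recl /=; congr (_ + _).
by apply: eq_bigr => i _; rewrite -iterSr.
Qed.

Lemma cylinderS_scons n w a x :
  cylinder n.+1 w (scons a x) <-> a = w 0%N /\ cylinder n (Defs.shift w) x.
Proof.
split=> [wax | [-> wx] [|i] //=]; last exact: wx.
by split=> [|i]; [exact: wax 0%N _ | exact: wax i.+1].
Qed.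

Lemma transfer_indic_cylinder psi f n w x :
  transfer psi (fun y => \1_(cylinder n.+1 w) y * f y) x =
  \1_(cylinder n (Defs.shift w)) x *
    (expR (psi (scons (w 0%N) x)) * f (scons (w 0%N) x)).
Proof.
rewrite /transfer (bigD1 (w 0%N)) //= big1 ?addr0 => [|a aw0]; last first.
  rewrite indicE; case: (boolP (_ \in _)) => [/set_mem/cylinderS_scons[a0 _]|_].
    by rewrite a0 eqxx in aw0.
  by rewrite mul0r mulr0.
rewrite !indicE; case: (boolP (x \in _)) => [/set_mem wx | wx].
  by rewrite mem_set ?mul1r //; apply/cylinderS_scons.
rewrite memNset ?mul0r ?mulr0 // => /cylinderS_scons[_ /mem_set]; exact/negP.
Qed.

Definition cylinder_filter x : set_system (Sigma q) :=
  filter_from setT (fun n => cylinder n x).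

Instance cylinder_filter_proper x : ProperFilter (cylinder_filter x).
Proof.
apply: filter_from_proper => [|n _]; last by exists x.
apply: filter_from_filter => [|m n _ _]; first by exists 0%N.
exists (maxn m n) => // y xy.
by split=> i ltin; apply: xy; rewrite leq_max ltin ?orbT.
Qed.

Lemma scontinuousP f : scontinuous f <-> forall x, f @ cylinder_filter x --> f x.
Proof.
split=> [fc x | fc x e e0].
  apply/cvgrPdist_lt => e e0; have [n fn] := fc x e e0.
  by exists n => // y /fn.
have /cvgrPdist_lt fce := fc x; have [n _ fn] := fce e e0.
by exists n => y /fn.
Qed.

Lemma scontinuous_cst (c : R) : scontinuous (fun _ : Sigma q => c).
Proof. by apply/scontinuousP => x; exact: cvg_cst. Qed.

Lemma scontinuousM f g : scontinuous f -> scontinuous g -> scontinuous (f \* g).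
Proof.
by move=> /scontinuousP fc /scontinuousP gc; apply/scontinuousP => x; exact: cvgM.
Qed.

Lemma scontinuous_comp f (h : R -> R) :
  scontinuous f -> continuous h -> scontinuous (h \o f).
Proof.
move=> /scontinuousP fc hc; apply/scontinuousP => x.
by apply: continuous_cvg; [exact: hc | exact: fc].
Qed.

Lemma scontinuous_scons f a : scontinuous f -> scontinuous (f \o scons a).
Proof.
move=> fc x e e0; have [n fn] := fc (scons a x) e e0.
by exists n => y xy; apply: fn => -[|i] //= ltin; apply: xy; exact: ltnW.
Qed.

Lemma scontinuous_indic_cylinder n w : scontinuous (\1_(cylinder n w) : Sigma q -> R).
Proof.
move=> x e e0; exists n => y xy; rewrite !indicE.
suff -> : (y \in cylinder n w) = (x \in cylinder n w) by rewrite subrr normr0.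
apply/idP/idP => /set_mem wz; apply/mem_set => i ltin; rewrite -wz //.
  by rewrite xy.
by rewrite -xy.
Qed.

Definition set_coord x n a : Sigma q := fun i => if i == n then a else x i.

Definition bounded_on_cylinder f n x := exists M, forall y, agree n x y -> `|f y| <= M.

Lemma bounded_on_cylinder_refine f n x :
  (forall a, bounded_on_cylinder f n.+1 (set_coord x n a)) -> bounded_on_cylinder f n x.
Proof.
move=> /choice[M fM]; exists (\sum_a `|M a|) => y xy.
apply: le_trans (fM (y n) y _) _.
  move=> i; rewrite ltnS leq_eqVlt /set_coord => /predU1P[-> | ltin].
    by rewrite eqxx.
  by rewrite (ltn_eqF ltin) xy.
rewrite (bigD1 (y n)) //= (le_trans (ler_norm _)) // lerDl sumr_ge0 //.
Qed.

(* Koenig's lemma: were [f] unbounded, the nested cylinders on which it stays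
   unbounded would shrink to a point at which [f] is not continuous. *)
Lemma scontinuous_bounded f : scontinuous f -> exists M : R, forall x, `|f x| <= M.
Proof.
move=> fc; pose x0 : Sigma q := fun=> ord0.
have [[M fM] | unb0] := pselect (bounded_on_cylinder f 0 x0).
  by exists M => x; apply: fM.
have step (nx : nat * Sigma q) : exists a, ~ bounded_on_cylinder f nx.1 nx.2 ->
    ~ bounded_on_cylinder f nx.1.+1 (set_coord nx.2 nx.1 a).
  have [b | unb] := pselect (bounded_on_cylinder f nx.1 nx.2); first by exists ord0.
  have /existsNP[a ha] :
      ~ (forall a, bounded_on_cylinder f nx.1.+1 (set_coord nx.2 nx.1 a)).
    by move/bounded_on_cylinder_refine.
  by exists a.
have [a ha] := choice step.
pose zs := fix zs k := if k is k.+1 then set_coord (zs k) k (a (k, zs k)) else x0.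
have unb k : ~ bounded_on_cylinder f k (zs k) by elim: k => // k IH; exact: (ha (k, zs k)).
have zsE m i : (i < m)%N -> zs m i = zs i.+1 i.
  elim: m => // m IH; rewrite ltnS leq_eqVlt => /predU1P[-> // | ltim].
  by rewrite /= /set_coord (ltn_eqF ltim) IH.
pose z i := zs i.+1 i.
have [N fN] := fc z 1 ltr01.
case: (unb N); exists (`|f z| + 1) => y zNy.
have zy : agree N z y by move=> i ltiN; rewrite zNy // zsE.
have := fN y zy; rewrite distrC => lt1.
rewrite -[f y](subrK (f z)); apply: le_trans (ler_normD _ _) _.
by rewrite addrC lerD2l ltW.
Qed.

Definition birkhoff_var psi n x y :=
  \sum_(i < n) `|psi (iter i (@Defs.shift q) x) - psi (iter i (@Defs.shift q) y)|.

Lemma birkhoff_dist_le_var psi n x y :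
  `|birkhoff psi n y - birkhoff psi n x| <= birkhoff_var psi n x y.
Proof.
rewrite /birkhoff -sumrB; apply: le_trans (ler_norm_sum _ _ _) _.
by apply: ler_sum => i _; rewrite distrC.
Qed.

Definition distortion psi n := supnorm (xi psi n) + supnorm (xi psi n).

Section BoundedPotential.
Variables (psi : Sigma q -> R) (M : R).
Hypothesis psiM : forall x, `|psi x| <= M.

Lemma birkhoff_var_le n x y : birkhoff_var psi n x y <= n%:R * (M + M).
Proof.
apply: (@le_trans _ _ (\sum_(i < n) (M + M))).
  by apply: ler_sum => i _; apply: le_trans (ler_normB _ _) _; exact: lerD.
by rewrite sumr_const card_ord mulr_natl.
Qed.

Lemma birkhoff_var_le_xi n x y : agree n x y -> birkhoff_var psi n x y <= xi psi n x.
Proof.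
move=> xy; apply: ub_le_sup; last by exists y.
by exists (n%:R * (M + M)) => _ [z _ <-]; exact: birkhoff_var_le.
Qed.

Lemma xi_ge0 n x : 0 <= xi psi n x.
Proof. by apply: le_trans (birkhoff_var_le_xi (y := x) _) => //; exact: sumr_ge0. Qed.

Lemma xi_le n x : xi psi n x <= n%:R * (M + M).
Proof.
apply: ge_sup; first by exists (birkhoff_var psi n x x), x.
by move=> _ [y _ <-]; exact: birkhoff_var_le.
Qed.

Lemma xi_le_supnorm n x : xi psi n x <= supnorm (xi psi n).
Proof.
apply: le_trans (ler_norm _) _; apply: ub_le_sup; last by exists x.
by exists (n%:R * (M + M)) => _ [y _ <-]; rewrite ger0_norm ?xi_ge0 ?xi_le.
Qed.

Lemma birkhoff_cylinder_dist n w y z : agree n w y -> agree n w z ->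
  `|birkhoff psi n y - birkhoff psi n z| <= distortion psi n.
Proof.
have dist_w v : agree n w v -> `|birkhoff psi n v - birkhoff psi n w| <= supnorm (xi psi n).
  move=> wv; apply: le_trans (xi_le_supnorm n w).
  exact: le_trans (birkhoff_dist_le_var _ _ _ _) (birkhoff_var_le_xi wv).
move=> /dist_w wy /dist_w wz; rewrite -(subrKA (birkhoff psi n w)).
by apply: le_trans (ler_normD _ _) _; rewrite distrC in wz; exact: lerD.
Qed.

End BoundedPotential.

Lemma subexp_xi psi c : 0 < c -> (fun n => supnorm (xi psi n) / n%:R) @ \oo --> 0 ->
  subexp (fun n => expR (distortion psi n) * c).
Proof.
move=> c0 xi0; apply: subexp_expRM => //.
by under eq_fun do rewrite mulrDl; rewrite -[0]addr0; exact: cvgD.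
Qed.

Lemma weak_bounded_variation_xi psi : scontinuous psi ->
  (fun n => supnorm (xi psi n) / n%:R) @ \oo --> 0 -> weak_bounded_variation psi.
Proof.
move=> /scontinuous_bounded[M psiM] xi0.
exists (fun n => expR (distortion psi n) * 1).
split=> [|n x y w xy xw]; first exact: subexp_xi.
rewrite mulr1 ler_expR; apply: le_trans (ler_norm _) _.
exact: (birkhoff_cylinder_dist psiM xy xw).
Qed.

Lemma measurable_cylinder n w : measurable (cylinder n w : set (SigmaM q)).
Proof. by apply: sub_sigma_algebra; exists n, w. Qed.

Section Conformal.
Local Open Scope ereal_scope.
Variables (psi : Sigma q -> R) (mu : {measure set (SigmaM q) -> \bar R}).
Hypotheses (psi_cont : scontinuous psi) (mu_conf : conformal psi mu).
Let lambda := spectral_radius psi.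

Lemma conformal_integral_cylinder n w f : scontinuous f ->
  (lambda ^+ n)%:E * \int[mu]_x (\1_(cylinder n w) x * f x)%:E =
  \int[mu]_x (expR (birkhoff psi n (prepend n w x)) * f (prepend n w x))%:E.
Proof.
elim: n w f => [|n IH] w f fc.
  rewrite expr0 mul1e; apply: eq_integral => x _.
  by rewrite prepend0 /birkhoff big_ord0 expR0 mul1r indicE mem_set ?mul1r.
rewrite exprSr EFinM -muleA -mu_conf.2; last first.
  exact/scontinuousM/fc/scontinuous_indic_cylinder.
under eq_integral do rewrite transfer_indic_cylinder.
have gc : scontinuous ((expR \o (psi \o scons (w 0%N))) \* (f \o scons (w 0%N)))%R.
  apply: scontinuousM; last exact: scontinuous_scons.
  by apply: scontinuous_comp; [exact: scontinuous_scons | exact: continuous_expR].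
rewrite IH //.
apply: eq_integral => x _; rewrite prependS birkhoffS expRD /=.
by congr (_%:E); rewrite mulrCA mulrA.
Qed.

Lemma conformal_cylinder n w : (lambda ^+ n)%:E * mu (cylinder n w) =
  \int[mu]_x (expR (birkhoff psi n (prepend n w x)))%:E.
Proof.
rewrite -[cylinder n w]setIT -(integral_indic _ measurableT (measurable_cylinder n w)).
under eq_integral do rewrite -[\1_ _ _]mulr1.
rewrite conformal_integral_cylinder; last exact: scontinuous_cst.
by under eq_integral do rewrite mulr1.
Qed.

Lemma conformal_massE : mu setT = (fine (mu setT))%:E.
Proof. by case: mu_conf => /andP[]; case: (mu setT). Qed.

Lemma conformal_mass_gt0 : (0 < fine (mu setT))%R.
Proof. by case: mu_conf => /andP[]; case: (mu setT) => //= m; rewrite lte_fin. Qed.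

Lemma spectral_radius_gt0 : (0 < lambda)%R.
Proof.
have [M psiM] := scontinuous_bounded psi_cont.
have := mu_conf.2 _ (scontinuous_cst 1); rewrite integral_cst // mul1e => conf1.
have : (expR (- M))%:E * mu setT <= \int[mu]_x (transfer psi (fun=> 1%R) x)%:E.
  apply: integral_ge_cst => [|x]; first exact/ltW/expR_gt0.
  rewrite /transfer (bigD1 ord0) //= mulr1 -[leLHS]addr0 lerD //.
    by rewrite ler_expR lerNl; apply: le_trans (ler_norm _) _; rewrite normrN.
  by rewrite sumr_ge0 // => a _; rewrite mulr1 ltW // expR_gt0.
rewrite conf1 conformal_massE -!EFinM lee_fin ler_pM2r ?conformal_mass_gt0 //.
exact: lt_le_trans (expR_gt0 _).
Qed.

Lemma conformal_cylinderE n w : mu (cylinder n w) = (fine (mu (cylinder n w)))%:E.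
Proof.
have mC := measurable_cylinder n w; rewrite fineK // ge0_fin_numE ?measure_ge0 //.
apply: le_lt_trans (le_measure _ _ _ (subsetT _)) _; rewrite ?inE //.
by case: mu_conf => /andP[].
Qed.

Lemma conformal_cylinder_bounds n w y : agree n w y ->
  (expR (birkhoff psi n y - distortion psi n) * fine (mu setT))%:E
    <= mu (cylinder n w) * (lambda ^+ n)%:E
    <= (expR (birkhoff psi n y + distortion psi n) * fine (mu setT))%:E.
Proof.
have [M psiM] := scontinuous_bounded psi_cont.
move=> wy; have dist z := birkhoff_cylinder_dist psiM (@agree_prepend n w z) wy.
rewrite muleC conformal_cylinder !EFinM -conformal_massE; apply/andP; split.
  apply: integral_ge_cst => [|z]; first exact/ltW/expR_gt0.
  by rewrite ler_expR; move: (dist z); rewrite ler_distl => /andP[].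
apply: integral_le_cst => [z|z]; first exact/ltW/expR_gt0.
by rewrite ler_expR; move: (dist z); rewrite ler_distl => /andP[].
Qed.

Lemma conformal_weak_gibbs : (fun n => supnorm (xi psi n) / n%:R)%R @ \oo --> 0%R ->
  weak_gibbs psi mu.
Proof.
move=> xi0; have m0 := conformal_mass_gt0; set m := fine (mu setT) in m0 *.
exists (ln lambda), (fun n => expR (distortion psi n) * (m + m^-1))%R; split.
  by apply: subexp_xi => //; rewrite addr_gt0 ?invr_gt0.
move=> n w y wy; have := conformal_cylinder_bounds wy.
set B := birkhoff psi n y; set d := distortion psi n.
rewrite conformal_cylinderE -!EFinM !lee_fin (expRD B) (expRD B d) (expRD (- B)) !expRN.
rewrite expRM_natl lnK ?posrE ?spectral_radius_gt0 // mulrCA => bounds.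
exact: le_symmetric_bounds (expR_gt0 _) (expR_gt0 _) m0 bounds.
Qed.

End Conformal.

End ShiftSpace.

Unset Implicit Arguments.

Theorem proposition5 (R : realType) (q : nat) (psi : Sigma q -> R) :
  scontinuous psi ->
  (fun n : nat => supnorm (xi psi n) / n%:R) @ \oo --> (0 : R) ->
  (forall mu : {measure set (SigmaM q) -> \bar R}, conformal psi mu -> weak_gibbs psi mu)
  /\ weak_bounded_variation psi.
Proof.
move=> psi_cont xi0; split; last exact: weak_bounded_variation_xi.
by move=> mu mu_conf; exact: conformal_weak_gibbs.
Qed.
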